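(* Let $\mathbf K$ be the linearly ordered set obtained from the lexicographic product $\mathbb N\ltimes\mathbb N$ (elements $m\ltimes n$ with $m,n\in\mathbb N$, ordered by $m\ltimes n< m'\ltimes n'$ iff $m<m'$, or $m=m'$ and $n<n'$) by adding a top element $\omega^2$, regarded as a complete lattice, and let $\mathbf L=\mathbf K\times\{0,1\}$ be the product lattice (componentwise order, $0<1$). Then in the complete lattice $\mathbf L$ the element $(\omega^2,0)$ is a relative generator, but $(\omega^2,0)$ belongs to the complete sublattice generated by the set $\Gamma$ of all non-generators of $\mathbf L$. In particular, $\Gamma$ is not a complete sublattice of $\mathbf L$.
   Context: A complete lattice is a partially ordered set in which every subset (including the empty set) has a meet and a join. A complete sublattice of a complete lattice $\mathbf L$ is a subset $T\subseteq L$ closed under arbitrary meets and joins computed in $L$, including those of the empty set (so $T$ contains the minimum and maximum of $L$). For $X\subseteq L$, $\langle X\rangle$ (the complete sublattice generated by $X$) is the intersection of all complete sublattices containing $X$, and $\langle X,a\rangle=\langle X\cup\{a\}\rangle$. An element $a$ is a non-generator if for every $X\subseteq L$, $\langle X,a\rangle=L$ implies $\langle X\rangle=L$; otherwise $a$ is a relative generator. *)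

From Stdlib Require Import Arith.

Inductive K : Type :=
| Fin : nat -> nat -> K
| Omega2 : K.

Definition leK (x y : K) : Prop :=
  match x, y with
  | Fin m n, Fin m' n' => m < m' \/ (m = m' /\ n <= n')
  | _, Omega2 => True
  | Omega2, Fin _ _ => False
  end.

(* L = K × {0,1}, with {0,1} encoded as bool (false = 0 < true = 1),
   componentwise order. *)
Definition L : Type := (K * bool)%type.

Definition leL (x y : L) : Prop :=
  leK (fst x) (fst y) /\ (snd x = false \/ snd y = true).

(* Least upper bound / greatest lower bound of a subset of L (exist in L,
   which is a complete lattice; unique as leL is antisymmetric). *)
Definition is_join (S : L -> Prop) (x : L) : Prop :=
  (forall y, S y -> leL y x) /\
  (forall z, (forall y, S y -> leL y z) -> leL x z).

Definition is_meet (S : L -> Prop) (x : L) : Prop :=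
  (forall y, S y -> leL x y) /\
  (forall z, (forall y, S y -> leL z y) -> leL z x).

(* complete sublattice: closed under arbitrary joins and meets computed in L
   (including those of the empty subset). *)
Definition complete_sublattice (T : L -> Prop) : Prop :=
  forall S : L -> Prop, (forall y, S y -> T y) ->
    (forall x, is_join S x -> T x) /\ (forall x, is_meet S x -> T x).

Definition gen (X : L -> Prop) : L -> Prop :=
  fun x => forall T, complete_sublattice T -> (forall y, X y -> T y) -> T x.

Definition add1 (X : L -> Prop) (a : L) : L -> Prop := fun y => X y \/ y = a.

Definition generates_all (X : L -> Prop) : Prop := forall x : L, gen X x.

Definition non_generator (a : L) : Prop :=
  forall X : L -> Prop, generates_all (add1 X a) -> generates_all X.

Definition relative_generator (a : L) : Prop := ~ non_generator a.

Definition Gamma : L -> Prop := non_generator.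

From Stdlib Require Import Arith Lia Classical.

(* The elements (M ⋉ 0, 0) are non-generators, and their join is (ω², 0).
   Suppose ⟨X, a⟩ = L for a = (c, 0), c = M ⋉ 0, and put G = ⟨X⟩.  For every
   complete sublattice Q of K, the set of points of L whose level lies in Q
   and which either lie at a level ≤ c or dominate a point of G in their own
   fibre is a complete sublattice; when it contains G and a it must be all
   of L.  With Q = K this puts (M ⋉ 1, 0) into G; with Q = K minus an open
   interval (d, c) it shows that the levels of G are cofinal below the limit
   c.  So the join of the points of G below level c sits at level c, and its
   meet with (M ⋉ 1, 0) is a.
   On the other hand ⟨K × {1}, (ω², 0)⟩ = L because (k, 0) = (k, 1) ∧ (ω², 0),
   while K × {1} ∪ {(0 ⋉ 0, 0)} is a complete sublattice avoiding (ω², 0). *)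

Lemma leK_refl k : leK k k.
Proof. destruct k; simpl; auto. Qed.

Lemma leK_trans a b c : leK a b -> leK b c -> leK a c.
Proof. destruct a, b, c; simpl; intuition (try lia). Qed.

Lemma leK_total a b : leK a b \/ leK b a.
Proof.
  destruct a as [m n|], b as [m' n'|]; simpl; auto.
  destruct (lt_eq_lt_dec m m') as [[h|h]|h]; [left; auto | | right; auto].
  subst; destruct (le_ge_dec n n'); [left|right]; auto.
Qed.

Lemma leK_nge a b : ~ leK a b -> leK b a.
Proof. destruct (leK_total a b); tauto. Qed.

Lemma leL_refl p : leL p p.
Proof. split; [apply leK_refl|]. destruct (snd p); auto. Qed.

Lemma leL_trans p q r : leL p q -> leL q r -> leL p r.
Proof.
  intros [Hpq Hpq'] [Hqr Hqr']. split; [eapply leK_trans; eauto|].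
  destruct Hpq'; [left|]; auto. destruct Hqr'; [congruence|auto].
Qed.

Definition supK (A : K -> Prop) (k : K) : Prop :=
  (forall y, A y -> leK y k) /\ (forall z, (forall y, A y -> leK y z) -> leK k z).

Definition infK (A : K -> Prop) (k : K) : Prop :=
  (forall y, A y -> leK k y) /\ (forall z, (forall y, A y -> leK z y) -> leK z k).

Definition complete_sublatticeK (Q : K -> Prop) : Prop :=
  forall A : K -> Prop, (forall y, A y -> Q y) ->
    (forall k, supK A k -> Q k) /\ (forall k, infK A k -> Q k).

Definition levels (S : L -> Prop) (k : K) : Prop := exists y, S y /\ fst y = k.

Lemma levels_sub {S : L -> Prop} {P : K -> Prop} :
  (forall y, S y -> P (fst y)) -> forall k, levels S k -> P k.
Proof. intros H k [y [Hy <-]]; auto. Qed.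

Lemma join_levels {S x} : is_join S x -> supK (levels S) (fst x).
Proof.
  intros Hx. split.
  - intros k [y [Hy <-]]. apply (proj1 Hx y Hy).
  - intros z Hz. assert (leL x (z, true)) as [h _]; [|exact h].
    apply (proj2 Hx). intros y Hy. split; [apply Hz; exists y; auto|right; reflexivity].
Qed.

Lemma meet_levels {S x} : is_meet S x -> infK (levels S) (fst x).
Proof.
  intros Hx. split.
  - intros k [y [Hy <-]]. apply (proj1 Hx y Hy).
  - intros z Hz. assert (leL (z, false) x) as [h _]; [|exact h].
    apply (proj2 Hx). intros y Hy. split; [apply Hz; exists y; auto|left; reflexivity].
Qed.

Lemma join_snd_false {S k y} : is_join S (k, false) -> S y -> snd y = false.
Proof. intros Hx Hy. destruct (proj1 Hx y Hy) as [_ [h|h]]; [exact h|discriminate h]. Qed.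

Lemma meet_snd_false {S k} : is_meet S (k, false) -> exists y, S y /\ snd y = false.
Proof.
  intros Hx. apply NNPP; intro N.
  assert (Htf : leL (k, true) (k, false)).
  { apply (proj2 Hx). intros y Hy. split; [apply (proj1 Hx y Hy)|right].
    destruct (snd y) eqn:E; auto. exfalso; apply N; eauto. }
  destruct Htf as [_ [h|h]]; discriminate h.
Qed.

Lemma is_join_intro S k b :
  supK (levels S) k -> (b = true <-> exists y, S y /\ snd y = true) -> is_join S (k, b).
Proof.
  intros Hk Hb. split.
  - intros y Hy. split; [apply (proj1 Hk); exists y; auto|].
    destruct (snd y) eqn:E; [right; apply Hb; eauto|left; auto].
  - intros z Hz. split; [apply (proj2 Hk); intros k' [y [Hy <-]]; apply (Hz y Hy)|].
    destruct b; [|left; reflexivity].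
    destruct (proj1 Hb eq_refl) as [y [Hy Hy']].
    destruct (Hz y Hy) as [_ [h|h]]; [congruence|right; exact h].
Qed.

Lemma is_meet_intro S k b :
  infK (levels S) k -> (b = false <-> exists y, S y /\ snd y = false) -> is_meet S (k, b).
Proof.
  intros Hk Hb. split.
  - intros y Hy. split; [apply (proj1 Hk); exists y; auto|].
    destruct (snd y) eqn:E; [right; reflexivity|left; apply Hb; eauto].
  - intros z Hz. split; [apply (proj2 Hk); intros k' [y [Hy <-]]; apply (Hz y Hy)|].
    destruct b; [right; reflexivity|].
    destruct (proj1 Hb eq_refl) as [y [Hy Hy']].
    destruct (Hz y Hy) as [_ [h|h]]; [left; exact h|congruence].
Qed.

Lemma join_exists {S k} : supK (levels S) k -> exists b, is_join S (k, b).
Proof.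
  intros Hk. destruct (classic (exists y, S y /\ snd y = true)) as [H|H].
  - exists true. apply is_join_intro; tauto.
  - exists false. apply is_join_intro; [exact Hk|]. split; [discriminate|tauto].
Qed.

Lemma meet_exists {S k} : infK (levels S) k -> exists b, is_meet S (k, b).
Proof.
  intros Hk. destruct (classic (exists y, S y /\ snd y = false)) as [H|H].
  - exists false. apply is_meet_intro; tauto.
  - exists true. apply is_meet_intro; [exact Hk|]. split; [discriminate|tauto].
Qed.

Lemma is_meet_pair k k' b :
  leK k k' -> is_meet (fun y => y = (k, b) \/ y = (k', false)) (k, false).
Proof.
  intros Hkk'. apply is_meet_intro.
  - split.
    + intros y [g [[-> | ->] <-]]; [apply leK_refl|exact Hkk'].
    + intros z Hz. apply Hz. exists (k, b). split; [left|]; reflexivity.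
  - split; [intros _; exists (k', false); split; [right|]; reflexivity|reflexivity].
Qed.

Lemma gen_complete_sublattice X : complete_sublattice (gen X).
Proof.
  intros S HS. split; intros x Hx T HT HX.
  - apply (proj1 (HT S (fun y Hy => HS y Hy T HT HX))); auto.
  - apply (proj2 (HT S (fun y Hy => HS y Hy T HT HX))); auto.
Qed.

Lemma gen_sub {X : L -> Prop} {y} : X y -> gen X y.
Proof. intros Hy T _ HXT. auto. Qed.

Lemma non_generator_intro a :
  (forall X, generates_all (add1 X a) -> gen X a) -> non_generator a.
Proof.
  intros H X HX p T HT HXT. apply (HX p T HT).
  intros y [Hy| ->]; [auto|exact (H X HX T HT HXT)].
Qed.

Lemma generates_all_add1 {X a V} :
  generates_all (add1 X a) -> complete_sublattice V ->
  (forall p, gen X p -> V p) -> V a -> forall p, V p.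
Proof.
  intros HX HV HGV Ha p. apply (HX p V HV).
  intros y [Hy| ->]; [apply HGV, gen_sub, Hy|exact Ha].
Qed.

Lemma complete_sublatticeK_interval_complement d c :
  complete_sublatticeK (fun k => leK k d \/ leK c k).
Proof.
  intros A HA. split; intros k Hk.
  - destruct (classic (exists y, A y /\ leK c y)) as [[y [Hy Hcy]]|N].
    + right. apply leK_trans with y; [exact Hcy|apply (proj1 Hk y Hy)].
    + left. apply (proj2 Hk). intros y Hy.
      destruct (HA y Hy) as [h|h]; [exact h|exfalso; eauto].
  - destruct (classic (exists y, A y /\ leK y d)) as [[y [Hy Hyd]]|N].
    + left. apply leK_trans with y; [apply (proj1 Hk y Hy)|exact Hyd].
    + right. apply (proj2 Hk). intros y Hy.
      destruct (HA y Hy) as [h|h]; [exfalso; eauto|exact h].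
Qed.

Definition cut_sublattice (G : L -> Prop) (c : K) (Q : K -> Prop) (p : L) : Prop :=
  Q (fst p) /\ (leK (fst p) c \/ exists g, G g /\ fst g = fst p /\ leL g p).

Definition fibre_below (G S : L -> Prop) (g : L) : Prop :=
  G g /\ exists s, S s /\ fst g = fst s /\ leL g s.

Section CutSublattice.

Variables (G : L -> Prop) (c : K) (Q : K -> Prop).
Hypotheses (G_cs : complete_sublattice G) (Q_cs : complete_sublatticeK Q).

Lemma sub_cut_sublattice :
  (forall p, G p -> Q (fst p)) -> forall p, G p -> cut_sublattice G c Q p.
Proof.
  intros HQ p Gp. split; [auto|].
  destruct (classic (leK (fst p) c)); [left; auto|right].
  exists p. split; [|split]; auto using leL_refl.
Qed.

Lemma cut_sublattice_dominated {S s} :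
  (forall s, S s -> cut_sublattice G c Q s) -> S s -> ~ leK (fst s) c ->
  exists g, fibre_below G S g /\ fst g = fst s.
Proof.
  intros HS Hs Hsc. destruct (HS s Hs) as [_ [h|[g [Gg [Hgs Hle]]]]]; [contradiction|].
  exists g. split; [split; [exact Gg|exists s; auto]|exact Hgs].
Qed.

Lemma cut_sublattice_join {S x} :
  (forall s, S s -> cut_sublattice G c Q s) -> is_join S x -> cut_sublattice G c Q x.
Proof.
  intros HS Hx. pose proof (join_levels Hx) as Hsup.
  assert (HQ : forall k, levels S k -> Q k).
  { apply levels_sub. intros s Hs. apply (HS s Hs). }
  split; [apply (proj1 (Q_cs _ HQ)), Hsup|].
  destruct (classic (leK (fst x) c)) as [Hxc|Hxc]; [left; exact Hxc|right].
  assert (Hs0 : exists s0, S s0 /\ ~ leK (fst s0) c).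
  { apply NNPP; intro N. apply Hxc, (proj2 Hsup).
    intros k [s [Hs <-]]. apply NNPP; intro h. apply N; eauto. }
  destruct Hs0 as [s0 [Hs0 Hs0c]].
  assert (Hsup' : supK (levels (fibre_below G S)) (fst x)).
  { split.
    - intros k [g [[_ [s [Hs [Hgs _]]]] <-]]. rewrite Hgs. apply (proj1 Hsup). exists s; auto.
    - intros z Hz.
      assert (Habove : forall s, S s -> ~ leK (fst s) c -> leK (fst s) z).
      { intros s Hs Hsc. destruct (cut_sublattice_dominated HS Hs Hsc) as [g [Hg <-]].
        apply Hz. exists g; auto. }
      apply (proj2 Hsup). intros k [s [Hs <-]].
      destruct (classic (leK (fst s) c)) as [h|h]; [|auto].
      apply leK_trans with (fst s0); [|auto].
      apply leK_trans with c; [exact h|apply leK_nge, Hs0c]. }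
  destruct (join_exists Hsup') as [b Hb].
  exists (fst x, b). split; [|split; [reflexivity|]].
  - apply (proj1 (G_cs (fibre_below G S) (fun g Hg => proj1 Hg))), Hb.
  - apply (proj2 Hb). intros g [_ [s [Hs [_ Hgs]]]].
    apply leL_trans with s; [exact Hgs|apply (proj1 Hx s Hs)].
Qed.

Lemma cut_sublattice_meet {S x} :
  (forall s, S s -> cut_sublattice G c Q s) -> is_meet S x -> cut_sublattice G c Q x.
Proof.
  intros HS Hx. pose proof (meet_levels Hx) as Hinf.
  assert (HQ : forall k, levels S k -> Q k).
  { apply levels_sub. intros s Hs. apply (HS s Hs). }
  split; [apply (proj2 (Q_cs _ HQ)), Hinf|].
  destruct (classic (leK (fst x) c)) as [Hxc|Hxc]; [left; exact Hxc|right].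
  assert (Habove : forall s, S s -> ~ leK (fst s) c).
  { intros s Hs h. apply Hxc, leK_trans with (fst s); [apply (proj1 Hx s Hs)|exact h]. }
  assert (Hinf' : infK (levels (fibre_below G S)) (fst x)).
  { split.
    - intros k [g [[_ [s [Hs [Hgs _]]]] <-]]. rewrite Hgs. apply (proj1 Hinf). exists s; auto.
    - intros z Hz. apply (proj2 Hinf). intros k [s [Hs <-]].
      destruct (cut_sublattice_dominated HS Hs (Habove s Hs)) as [g [Hg <-]].
      apply Hz. exists g; auto. }
  destruct (meet_exists Hinf') as [b Hb].
  exists (fst x, b). split; [|split; [reflexivity|]].
  - apply (proj2 (G_cs (fibre_below G S) (fun g Hg => proj1 Hg))), Hb.
  - apply (proj2 Hx). intros s Hs.
    destruct (HS s Hs) as [_ [h|[g [Gg [Hgs Hle]]]]]; [exfalso; exact (Habove s Hs h)|].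
    apply leL_trans with g; [|exact Hle].
    apply (proj1 Hb). split; [exact Gg|exists s; auto].
Qed.

Lemma cut_sublattice_complete : complete_sublattice (cut_sublattice G c Q).
Proof.
  intros S HS. split; intros x Hx.
  - exact (cut_sublattice_join HS Hx).
  - exact (cut_sublattice_meet HS Hx).
Qed.

End CutSublattice.

Section LimitNonGenerator.

Variables (M : nat) (G : L -> Prop).
Hypothesis G_cs : complete_sublattice G.
Hypothesis G_spans : forall V, complete_sublattice V ->
  (forall p, G p -> V p) -> V (Fin M 0, false) -> forall p, V p.

Lemma cut_sublattice_full {Q} :
  complete_sublatticeK Q -> (forall p, G p -> Q (fst p)) -> Q (Fin M 0) ->
  forall p, cut_sublattice G (Fin M 0) Q p.
Proof.
  intros HQ HGQ Hc. apply G_spans.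
  - apply cut_sublattice_complete; assumption.
  - apply sub_cut_sublattice, HGQ.
  - split; [exact Hc|left; apply leK_refl].
Qed.

Lemma succ_level_mem : G (Fin M 1, false).
Proof.
  assert (HQ : complete_sublatticeK (fun _ => True)) by (split; intros; exact I).
  destruct (cut_sublattice_full HQ (fun _ _ => I) I (Fin M 1, false))
    as [_ [h|[[k b] [Gg [Hg [_ Hb]]]]]]; simpl in *; [lia|].
  subst k. destruct Hb as [-> | h]; [exact Gg|discriminate].
Qed.

Lemma levels_cofinal_below_limit {d} : ~ leK (Fin M 0) d ->
  exists g, G g /\ ~ leK (fst g) d /\ ~ leK (Fin M 0) (fst g).
Proof.
  intros Hd. apply NNPP; intro N.
  assert (HGQ : forall p, G p -> leK (fst p) d \/ leK (Fin M 0) (fst p)).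
  { intros p Gp. destruct (classic (leK (fst p) d)); [left; auto|right].
    apply NNPP; intro h. apply N; eauto. }
  destruct d as [m n|]; [|contradiction Hd; exact I].
  (* Fin m (S n) lies strictly between d and the limit Fin M 0 *)
  destruct (cut_sublattice_full (complete_sublatticeK_interval_complement _ _) HGQ
              (or_intror (leK_refl _)) (Fin m (S n), false)) as [[h|h] _];
    simpl in *; lia.
Qed.

Lemma limit_point_mem : G (Fin M 0, false).
Proof.
  set (below := fun g => G g /\ ~ leK (Fin M 0) (fst g)).
  assert (Hsup : supK (levels below) (Fin M 0)).
  { split.
    - intros k [g [[_ h] <-]]. apply leK_nge, h.
    - intros z Hz. apply NNPP; intro h.
      destruct (levels_cofinal_below_limit h) as [g [Gg [Hgz Hg]]].
      apply Hgz, Hz. exists g. split; [split|]; auto. }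
  destruct (join_exists Hsup) as [b Hb].
  assert (Hpair : forall y, y = (Fin M 0, b) \/ y = (Fin M 1, false) -> G y).
  { intros y [-> | ->]; [|exact succ_level_mem].
    apply (proj1 (G_cs below (fun g Hg => proj1 Hg))), Hb. }
  apply (proj2 (G_cs _ Hpair)), is_meet_pair. simpl; lia.
Qed.

End LimitNonGenerator.

Lemma non_generator_limit M : non_generator (Fin M 0, false).
Proof.
  apply non_generator_intro. intros X HX.
  apply (limit_point_mem M (gen X) (gen_complete_sublattice X)).
  intros V HV HGV Ha. exact (generates_all_add1 HX HV HGV Ha).
Qed.

Lemma complete_sublattice_upper_layer_bottom :
  complete_sublattice (fun p => snd p = true \/ p = (Fin 0 0, false)).
Proof.
  assert (Hbot : forall k, leK k (Fin 0 0) -> k = Fin 0 0).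
  { destruct k; simpl; intros h; [f_equal; lia|contradiction]. }
  intros S HS. split; intros [k b] Hx; (destruct b; [left; reflexivity|right; f_equal]).
  - apply Hbot, (proj2 (join_levels Hx)). intros y [s [Hs <-]].
    destruct (HS s Hs) as [h| ->]; [|apply leK_refl].
    rewrite (join_snd_false Hx Hs) in h. discriminate.
  - destruct (meet_snd_false Hx) as [s [Hs Hsf]].
    destruct (HS s Hs) as [h| ->]; [congruence|].
    apply Hbot, (proj1 (meet_levels Hx)). exists (Fin 0 0, false); auto.
Qed.

Lemma relative_generator_Omega2 : relative_generator (Omega2, false).
Proof.
  intro H.
  set (X := fun p : L => snd p = true).
  assert (HX : generates_all (add1 X (Omega2, false))).
  { intros [k b] T HT HXT. destruct b; [apply HXT; left; reflexivity|].
    assert (Hpair : forall y, y = (k, true) \/ y = (Omega2, false) -> T y).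
    { intros y [-> | ->]; apply HXT; [left; reflexivity|right; reflexivity]. }
    apply (proj2 (HT _ Hpair)), is_meet_pair. destruct k; exact I. }
  destruct (H X HX (Omega2, false) _ complete_sublattice_upper_layer_bottom
              (fun y Hy => or_introl Hy)) as [h|h]; discriminate h.
Qed.

Lemma gen_Gamma_Omega2 : gen Gamma (Omega2, false).
Proof.
  intros T HT HG.
  assert (Hlimits : forall y, (exists M, y = (Fin M 0, false)) -> T y).
  { intros y [M ->]. apply HG, non_generator_limit. }
  apply (proj1 (HT _ Hlimits)), is_join_intro.
  - split; [intros y _; destruct y; exact I|].
    intros [m n|] Hz; [|exact I].
    assert (h : leK (Fin (S m) 0) (Fin m n)) by (apply Hz; exists (Fin (S m) 0, false); eauto).
    simpl in h; lia.
  - split; [discriminate|]. intros [y [[M ->] h]]; discriminate.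
Qed.

Theorem theorem4 :
  relative_generator (Omega2, false) /\
  gen Gamma (Omega2, false) /\
  ~ complete_sublattice Gamma.
Proof.
  split; [exact relative_generator_Omega2|].
  split; [exact gen_Gamma_Omega2|].
  intro Hcs. apply relative_generator_Omega2.
  exact (gen_Gamma_Omega2 Gamma Hcs (fun y Hy => Hy)).
Qed.
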